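(* Let $\Pi$ be a set of policies and $\Theta^T$ a finite set of environment parameterizations, and for each $\vec\theta\in\Theta^T$ and $\pi\in\Pi$ let $U^{\vec\theta}(\pi)\in\mathbb{R}$ be the utility of $\pi$ in the environment parameterized by $\vec\theta$; assume that for each $\vec\theta$ the maximum $\max_{\pi'\in\Pi}U^{\vec\theta}(\pi')$ is attained and that the set $\textsc{MinimaxRegret}$ defined below is nonempty. Let real numbers $\mathbf{F}_{min}\le\mathbf{F}_{max}<\mathbf{S}_{min}\le\mathbf{S}_{max}$ satisfy $\mathbf{S}_{max}-\mathbf{S}_{min}<\mathbf{S}_{min}-\mathbf{F}_{max}$ and $\mathbf{F}_{max}-\mathbf{F}_{min}<\mathbf{S}_{min}-\mathbf{F}_{max}$, and suppose that every achievable utility satisfies $U^{\vec\theta}(\pi)\in[\mathbf{F}_{min},\mathbf{F}_{max}]\cup[\mathbf{S}_{min},\mathbf{S}_{max}]$ for all $\pi\in\Pi$, $\vec\theta\in\Theta^T$. Say $\pi$ succeeds on $\vec\theta$ if $U^{\vec\theta}(\pi)\in[\mathbf{S}_{min},\mathbf{S}_{max}]$. Suppose there exists $\pi^*\in\Pi$ such that for every $\vec\theta\in\Theta^T$, if some policy in $\Pi$ succeeds on $\vec\theta$ then $\pi^*$ succeeds on $\vec\theta$. Then every $\pi\in\textsc{MinimaxRegret}$ has the same property: for every $\vec\theta\in\Theta^T$, if some policy in $\Pi$ succeeds on $\vec\theta$, then $\pi$ succeeds on $\vec\theta$.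
   Context: Regret of a policy $\pi$ on parameterization $\vec\theta$: $\textsc{Regret}(\pi,\vec\theta)=\max_{\pi^B\in\Pi}\{U^{\vec\theta}(\pi^B)-U^{\vec\theta}(\pi)\}$. The set of minimax regret policies is $\textsc{MinimaxRegret}=\arg\min_{\pi\in\Pi}\max_{\vec\theta\in\Theta^T}\textsc{Regret}(\pi,\vec\theta)$. (In the paper, $\vec\theta$ ranges over sequences of free parameters of an underspecified POMDP, and $U^{\vec\theta}(\pi)$ is the expected discounted return of $\pi$ in the POMDP obtained by fixing those parameters.) *)

From Stdlib Require Import Reals List.
Open Scope R_scope.

Definition IsMax (P : R -> Prop) (v : R) : Prop :=
  P v /\ forall w, P w -> w <= v.

Definition RegretIs {Pol Th : Type} (U : Th -> Pol -> R) (pi : Pol) (th : Th) (r : R) : Prop :=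
  IsMax (fun w => exists piB : Pol, w = U th piB - U th pi) r.

Definition MaxRegretIs {Pol Th : Type} (U : Th -> Pol -> R) (pi : Pol) (m : R) : Prop :=
  IsMax (fun w => exists th : Th, exists r, RegretIs U pi th r /\ w = r) m.

Definition MinimaxRegret {Pol Th : Type} (U : Th -> Pol -> R) (pi : Pol) : Prop :=
  exists m, MaxRegretIs U pi m /\
    forall pi' m', MaxRegretIs U pi' m' -> m <= m'.

Definition succeeds {Pol Th : Type} (U : Th -> Pol -> R) (Smin Smax : R) (pi : Pol) (th : Th) : Prop :=
  Smin <= U th pi <= Smax.

(* Utilities live in two bands, failures in [Fmin, Fmax] and successes in
   [Smin, Smax], separated by a gap Smin - Fmax wider than either band.
   - An "oracle" policy pstar, succeeding whenever any policy can, has every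
     regret strictly below the gap: comparing two utilities from the same band
     costs less than the gap, and a success against a failure of pstar cannot
     occur by the oracle property.
   - A policy that fails on an environment where some policy succeeds has a
     regret of at least the gap there.
   Since Theta^T is finite and per-environment maxima are attained, the
   maximal regret of pstar exists; a minimax-regret policy has maximal regret
   at most that of pstar, hence below the gap, so it never fails where success
   is possible. *)

From Stdlib Require Import Reals List Lra.
Open Scope R_scope.

Lemma ismax_unique (P : R -> Prop) (v v' : R) : IsMax P v -> IsMax P v' -> v = v'.
Proof.
  intros [Hv Hv_ub] [Hv' Hv'_ub].
  specialize (Hv_ub _ Hv'). specialize (Hv'_ub _ Hv). lra.
Qed.

Lemma list_max_attained {A : Type} (g : A -> R -> Prop)
  (g_total : forall x, exists r, g x r)
  (g_functional : forall x r r', g x r -> g x r' -> r = r') :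
  forall (l : list A) (a : A), exists m,
    (exists x, In x (a :: l) /\ g x m) /\
    forall x r, In x (a :: l) -> g x r -> r <= m.
Proof.
  induction l as [|b l IH]; intros a; destruct (g_total a) as [ra Hra].
  - exists ra. split.
    + exists a. split; [left; reflexivity | exact Hra].
    + intros x r [<- | []] Hr. rewrite (g_functional _ _ _ Hr Hra). lra.
  - destruct (IH b) as [m [[xm [Hxm_in Hxm]] Hm_ub]].
    destruct (Rle_dec ra m) as [Hle | Hgt].
    + exists m. split.
      * exists xm. split; [right; exact Hxm_in | exact Hxm].
      * intros x r [<- | Hin] Hr.
        -- rewrite (g_functional _ _ _ Hr Hra). exact Hle.
        -- exact (Hm_ub x r Hin Hr).
    + exists ra. split.
      * exists a. split; [left; reflexivity | exact Hra].
      * intros x r [<- | Hin] Hr.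
        -- rewrite (g_functional _ _ _ Hr Hra). lra.
        -- specialize (Hm_ub x r Hin Hr). lra.
Qed.

Section Regret.

Variables (Pol Th : Type) (U : Th -> Pol -> R).

Lemma regret_at_argmax (pi : Pol) (th : Th) (pm : Pol) :
  (forall p, U th p <= U th pm) -> RegretIs U pi th (U th pm - U th pi).
Proof.
  intros Hpm. split.
  - exists pm. reflexivity.
  - intros w [q ->]. specialize (Hpm q). lra.
Qed.

Lemma max_regret_exists (pi : Pol) (th0 : Th)
  (Th_fin : exists l : list Th, forall th : Th, In th l)
  (Hmax : forall th : Th, exists pm : Pol, forall p : Pol, U th p <= U th pm) :
  exists m, MaxRegretIs U pi m.
Proof.
  destruct Th_fin as [l Hl].
  assert (regret_total : forall th, exists r, RegretIs U pi th r).
  { intros th. destruct (Hmax th) as [pm Hpm].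
    exists (U th pm - U th pi). exact (regret_at_argmax pi th pm Hpm). }
  destruct (list_max_attained (RegretIs U pi) regret_total
              (fun th r r' => ismax_unique _ r r') l th0)
    as [m [[thm [_ Hthm]] Hm_ub]].
  exists m. split.
  - exists thm, m. split; [exact Hthm | reflexivity].
  - intros w [th [r [Hr ->]]]. apply (Hm_ub th r); [right; apply Hl | exact Hr].
Qed.

Lemma failure_regret_above_gap (Fmax Smin : R) (pi p : Pol) (th : Th) (r : R) :
  Smin <= U th p -> U th pi <= Fmax -> RegretIs U pi th r -> Smin - Fmax <= r.
Proof.
  intros Hp Hpi [_ Hr_ub].
  specialize (Hr_ub (U th p - U th pi) (ex_intro _ p eq_refl)). lra.
Qed.

Variables (Fmin Fmax Smin Smax : R).
Hypotheses (gap_pos : Fmax < Smin)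
  (success_band_narrow : Smax - Smin < Smin - Fmax)
  (failure_band_narrow : Fmax - Fmin < Smin - Fmax)
  (utility_bands : forall (th : Th) (p : Pol),
      (Fmin <= U th p <= Fmax) \/ (Smin <= U th p <= Smax)).

Lemma oracle_regret_below_gap (pstar : Pol) (th : Th) (r : R) :
  ((exists p, succeeds U Smin Smax p th) -> succeeds U Smin Smax pstar th) ->
  RegretIs U pstar th r -> r < Smin - Fmax.
Proof.
  intros Horacle [[q ->] _].
  destruct (utility_bands th q) as [Hq | Hq];
    destruct (utility_bands th pstar) as [Hs | Hs];
    try lra.
  assert (Hsucc : succeeds U Smin Smax pstar th) by (apply Horacle; exists q; exact Hq).
  unfold succeeds in Hsucc. lra.
Qed.

End Regret.

Theorem theorem1 (Pol Th : Type) (U : Th -> Pol -> R)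
  (* Theta^T is finite *)
  (Th_fin : exists l : list Th, forall th : Th, In th l)
  (* for each theta, max_{pi'} U^theta(pi') is attained *)
  (Hmax : forall th : Th, exists pm : Pol, forall p : Pol, U th p <= U th pm)
  (* MinimaxRegret is nonempty *)
  (Hne : exists pi0 : Pol, MinimaxRegret U pi0)
  (Fmin Fmax Smin Smax : R)
  (H1 : Fmin <= Fmax) (H2 : Fmax < Smin) (H3 : Smin <= Smax)
  (H4 : Smax - Smin < Smin - Fmax) (H5 : Fmax - Fmin < Smin - Fmax)
  (Hrange : forall (th : Th) (p : Pol),
      (Fmin <= U th p <= Fmax) \/ (Smin <= U th p <= Smax))
  (Hstar : exists pstar : Pol, forall th : Th,
      (exists p : Pol, succeeds U Smin Smax p th) -> succeeds U Smin Smax pstar th) :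
  forall pi : Pol, MinimaxRegret U pi ->
    forall th : Th, (exists p : Pol, succeeds U Smin Smax p th) -> succeeds U Smin Smax pi th.
Proof.
  intros pi [m [[_ Hm_ub] Hm_min]] th [p Hp].
  destruct Hstar as [pstar Hpstar].
  (* The maximal regret of the oracle lies below the gap, hence so does [m]. *)
  destruct (max_regret_exists Pol Th U pstar th Th_fin Hmax)
    as [mstar Hmstar].
  pose proof (Hm_min pstar mstar Hmstar) as Hm_le.
  destruct Hmstar as [[thstar [r [Hr ->]]] _].
  pose proof (oracle_regret_below_gap Pol Th U Fmin Fmax Smin Smax
                H2 H4 H5 Hrange pstar thstar r (Hpstar thstar) Hr) as Hr_gap.
  (* If [pi] failed on [th], its regret there would reach the gap. *)
  unfold succeeds in *.
  destruct (Hrange th pi) as [Hfail | Hsucc]; [exfalso | exact Hsucc].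
  destruct (Hmax th) as [pm Hpm].
  pose proof (regret_at_argmax Pol Th U pi th pm Hpm) as Hreg.
  pose proof (failure_regret_above_gap Pol Th U Fmax Smin pi p th _
                (proj1 Hp) (proj2 Hfail) Hreg) as Hreg_gap.
  assert (U th pm - U th pi <= m)
    by (apply Hm_ub; exists th, (U th pm - U th pi); split; [exact Hreg | reflexivity]).
  lra.
Qed.
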